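(* Let $X$ be a crowded T$_D$ space. Then: (1) every open neighbourhood $O$ of a point $x\in X$ includes an open neighbourhood $O'$ of $x$ such that $O'-\{x\}$ is non-empty and open; (2) for every open $O\subseteq X$ and every $S\subseteq X$, if $O\subseteq\mathrm{cl}_XS$ then $O\subseteq\mathrm{d}_XS$; (3) $\mathrm{int}_X\mathrm{cl}_XS=\mathrm{int}_X\mathrm{d}_XS$ for every $S\subseteq X$; (4) for every topological model $\mathcal{M}$ on $X$ and every formula $\varphi$, $\mathcal{M}_d(\Diamond^*(\Box^*\varphi\lor\Box^*\neg\varphi))=\mathcal{M}_d(\Diamond(\Box\varphi\lor\Box\neg\varphi))$.
   Context: For $S\subseteq X$, $\mathrm{cl}_X S$, $\mathrm{int}_XS$ are closure and interior, and $\mathrm{d}_XS$ is the set of limit points of $S$ ($x$ such that every $O-\{x\}$, $O$ an open neighbourhood of $x$, meets $S$). $X$ is crowded if it has no isolated points, and T$_D$ if $\mathrm{d}_X\{x\}$ is closed for every $x$. $\Diamond^*\psi$ abbreviates $\psi\lor\Diamond\psi$ and $\Box^*\psi$ abbreviates $\psi\land\Box\psi$. A topological model $\mathcal{M}$ on $X$ is a valuation of propositional variables by subsets of $X$; $\mathcal{M}_d(\varphi)$ is defined inductively with Boolean connectives as set operations, $\mathcal{M}_d(\Diamond\varphi)=\mathrm{d}_X(\mathcal{M}_d(\varphi))$ and $\mathcal{M}_d(\Box\varphi)=\mathcal{M}_d(\neg\Diamond\neg\varphi)$. *)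

From mathcomp Require Import all_boot all_order.
From mathcomp Require Import all_classical topology.
Set Implicit Arguments. Unset Strict Implicit. Unset Printing Implicit Defensive.
Local Open Scope classical_set_scope.

Definition dset {X : topologicalType} (S : set X) : set X :=
  [set x | forall O : set X, open O -> O x -> (O `\ x) `&` S !=set0].

Definition crowded (X : topologicalType) : Prop :=
  forall x : X, ~ open [set x].

Definition TD_space (X : topologicalType) : Prop :=
  forall x : X, closed (dset [set x]).

Inductive form : Type :=
| Var : nat -> form
| Bot : form
| Neg : form -> form
| And : form -> form -> form
| Or  : form -> form -> form
| Dia : form -> form
| Box : form -> form.

Definition DiaS (p : form) : form := Or p (Dia p).
Definition BoxS (p : form) : form := And p (Box p).

Fixpoint dsem {X : topologicalType} (V : nat -> set X) (p : form) : set X :=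
  match p with
  | Var n => V n
  | Bot => set0
  | Neg q => ~` dsem V q
  | And q r => dsem V q `&` dsem V r
  | Or q r => dsem V q `|` dsem V r
  | Dia q => dset (dsem V q)
  | Box q => ~` dset (~` dsem V q)
  end.

From mathcomp Require Import all_boot all_order.
From mathcomp Require Import all_classical topology.
Set Implicit Arguments.
Unset Strict Implicit.
Unset Printing Implicit Defensive.

Local Open Scope classical_set_scope.

(* In a T_D space, O ∩ ~d{x} is an open neighbourhood of x that stays open
   when x is removed, and crowdedness keeps the punctured set nonempty;
   picking points in it gives (2), hence (3).  For (4): a point of □Q has a
   punctured neighbourhood inside Q, so it is a limit of interior points of Q,
   which lie in □*Q; and T_D makes d(dS) ⊆ dS.  Hence both sides equal
   d(□φ ∨ □¬φ). *)

Section DerivedSet.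
Variable X : topologicalType.
Implicit Types (S Q A B O : set X) (x y : X).

Lemma dsetS A B : A `<=` B -> dset A `<=` dset B.
Proof.
by move=> AB x dA O oO Ox; have [z [Oz /AB Bz]] := dA O oO Ox; exists z.
Qed.

Lemma dset_sub_closure S : dset S `<=` closure S.
Proof.
move=> x dx B; rewrite nbhsE => -[U [oU Ux] UB].
by have [z [[Uz _] Sz]] := dx U oU Ux; exists z; split => //; exact: UB.
Qed.

Lemma dsetPn S y : ~ dset S y -> exists U, [/\ open U, U y & U `\ y `<=` ~` S].
Proof.
move=> ndy; apply: contrapT => noU; apply: ndy => O oO Oy.
apply/set0P/negP => /eqP OS0; apply: noU; exists O; split => // z Oyz Sz.
by have : ((O `\ y) `&` S) z by []; rewrite OS0.
Qed.

Lemma dset1_notin x : ~ dset [set x] x.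
Proof. by move=> /(_ setT openT I) [z [[_ zx] xz]]; apply: zx. Qed.

Lemma interior_sub_boxS Q : Q° `<=` Q `&` ~` dset (~` Q).
Proof.
move=> x /[dup] /interior_subset Qx; rewrite /interior nbhsE => -[U [oU Ux] UQ].
by split => // /(_ U oU Ux) [z [[/UQ Qz _] nQz]].
Qed.

Section TD.
Hypothesis htd : TD_space X.

Lemma open_dset1C x O : open O -> open (O `&` ~` dset [set x]).
Proof. by move=> oO; apply: openI => //; exact/closed_openC/htd. Qed.

Lemma open_dset1C_setD1 x O : open O -> open ((O `&` ~` dset [set x]) `\ x).
Proof.
move=> oO; rewrite openE => y [[Oy ndy] yx].
have [U [oU Uy Ux]] := dsetPn ndy.
rewrite /interior nbhsE; exists (U `&` (O `&` ~` dset [set x])).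
  by split; [apply: openI => //; exact: open_dset1C|].
move=> z [Uz O'z]; split => // zx; rewrite zx in Uz.
by apply: (Ux x) => //; split => // xy; apply: yx.
Qed.

(* Since y avoids d{x}, a neighbourhood of y misses x, so the points of S found
   near y are different from x. *)
Lemma dset_dset_sub S : dset (dset S) `<=` dset S.
Proof.
move=> x ddx O oO Ox.
have [y [[[Oy ndy] yx] dSy]] :=
  ddx _ (open_dset1C x oO) (conj Ox (@dset1_notin x)).
have [U [oU Uy Ux]] := dsetPn ndy.
have [z [[[Uz [Oz _]] zy] Sz]] :=
  dSy _ (openI oU (open_dset1C x oO)) (conj Uy (conj Oy ndy)).
by exists z; split => //; split => // zx; apply: (Ux z).
Qed.

Lemma setU_dset_eq A B : A `<=` B -> B `<=` dset A -> A `|` dset A = dset B.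
Proof.
move=> AB BdA; apply/seteqP; split.
  by move=> x [/AB/BdA|] dAx; apply: dsetS AB _ _.
by move=> x /(dsetS BdA) /dset_dset_sub; right.
Qed.

Hypothesis hcr : crowded X.

Lemma open_punctured_nbhs x O : open O -> O x ->
  exists O', [/\ open O', O' x, O' `<=` O, O' `\ x !=set0 & open (O' `\ x)].
Proof.
move=> oO Ox; exists (O `&` ~` dset [set x]); split.
- exact: open_dset1C.
- by split => //; exact: dset1_notin.
- by move=> z [].
- apply/set0P/negP => /eqP O'x0; apply: (@hcr x).
  rewrite -[[set x]]setU0 -O'x0 setD1K; first exact: open_dset1C.
  by split => //; exact: dset1_notin.
- exact: open_dset1C_setD1.
Qed.

Lemma open_sub_closure_dset O S : open O -> O `<=` closure S -> O `<=` dset S.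
Proof.
move=> oO OS x Ox U oU Ux.
have [O' [_ _ O'UO [y [O'y yx]] oO'x]] :=
  open_punctured_nbhs (openI oU oO) (conj Ux Ox).
have [z [Sz [O'z zx]]] := OS y (O'UO y O'y).2 (O' `\ x)
  (open_nbhs_nbhs (conj oO'x (conj O'y yx))).
by exists z; split => //; split => //; exact: (O'UO z O'z).1.
Qed.

Lemma interior_closure_dset S : (closure S)° = (dset S)°.
Proof.
apply/seteqP; split; last exact/interiorS/dset_sub_closure.
move=> x; rewrite /interior nbhsE => -[U [oU Ux] US].
by exists U => //; exact: open_sub_closure_dset.
Qed.

Lemma box_sub_dset_interior Q : ~` dset (~` Q) `<=` dset Q°.
Proof.
move=> x /dsetPn [U [oU Ux UQ]] W oW Wx.
have [O' [_ _ O'WU [z [O'z zx]] oO'x]] :=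
  open_punctured_nbhs (openI oW oU) (conj Wx Ux).
have : O' `\ x `<=` Q.
  move=> y [O'y yx]; apply: contrapT; apply: UQ.
  by split => //; exact: (O'WU y O'y).2.
rewrite (open_subsetE _ oO'x) => O'Q.
by exists z; split; [split => //; exact: (O'WU z O'z).1 | exact: O'Q].
Qed.

End TD.
End DerivedSet.

Theorem lemma8 (X : topologicalType) (hcr : crowded X) (htd : TD_space X) :
  (forall (x : X) (O : set X), open O -> O x ->
     exists O' : set X, [/\ open O', O' x, O' `<=` O,
                          O' `\ x !=set0 & open (O' `\ x)]) /\
  (forall (O S : set X), open O -> O `<=` closure S -> O `<=` dset S) /\
  (forall S : set X, interior (closure S) = interior (dset S)) /\
  (forall (V : nat -> set X) (p : form),
     dsem V (DiaS (Or (BoxS p) (BoxS (Neg p)))) =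
     dsem V (Dia (Or (Box p) (Box (Neg p))))).
Proof.
split; first exact: open_punctured_nbhs.
split; first exact: open_sub_closure_dset.
split; first exact: interior_closure_dset.
move=> V p /=; apply: (setU_dset_eq htd).
  by move=> x [[_ ?]|[_ ?]]; [left|right].
by move=> x [] /(box_sub_dset_interior htd hcr);
  apply: dsetS => z /interior_sub_boxS; [left|right].
Qed.
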